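(* Let $x_0\in\mathbb{R}\cup\{+\infty\}$, $T<x_0$, $I:=[T,x_0)$, and let $\phi_1,\phi_2\in C^1(I)$ satisfy $\phi_2(x)=o(\phi_1(x))$ as $x\to x_0$, $\phi_1(x)>0$ and $\phi_2(x)\neq0$ for all $x\in I$, and $W(\phi_1,\phi_2;x)>0$ for all $x\in I$. Define on $I$ $$\overline\psi_1:=\phi_1,\quad \overline\psi_2(x):=\phi_1(x)\int_T^x\Big(\frac{\phi_2(t)}{\phi_1(t)}\Big)'dt;\qquad \overline{\overline\psi}_1:=|\phi_2|,\quad \overline{\overline\psi}_2(x):=-|\phi_2(x)|\int_T^x\Big(\frac{\phi_1(t)}{\phi_2(t)}\Big)'dt.$$ Then each of the pairs $(\overline\psi_1,\overline\psi_2)$ and $(\overline{\overline\psi}_1,\overline{\overline\psi}_2)$ consists of $C^1(I)$ functions with positive first component and positive Wronskian on $I$, and $$f\in\mathcal{C}(\phi_1,\phi_2;I)\iff f\in\mathcal{C}(\overline\psi_1,\overline\psi_2;I)\iff f\in\mathcal{C}(\overline{\overline\psi}_1,\overline{\overline\psi}_2;I).$$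
   Context: $W(g,h;x):=g(x)h'(x)-g'(x)h(x)$. For continuous $\psi_1,\psi_2$ on an interval $J$, $f:J\to\mathbb{R}$ belongs to $\mathcal{C}(\psi_1,\psi_2;J)$ iff for all $t_1<t_2<t_3$ in $J$ $$\det\begin{pmatrix}\psi_1(t_1)&\psi_1(t_2)&\psi_1(t_3)\\ \psi_2(t_1)&\psi_2(t_2)&\psi_2(t_3)\\ f(t_1)&f(t_2)&f(t_3)\end{pmatrix}\ge0.$$ *)

From Stdlib Require Import Reals Lra.
From Coquelicot Require Import Coquelicot.
Open Scope R_scope.

Definition in_I (T : R) (x0 : Rbar) (x : R) : Prop := T <= x /\ Rbar_lt x x0.

(* f has derivative f'(x) at x within the set D (one-sided at endpoints). *)
Definition has_deriv_within (D : R -> Prop) (f f' : R -> R) (x : R) : Prop :=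
  filterlim (fun y => (f y - f x) / (y - x))
            (within (fun y => D y /\ y <> x) (locally x)) (locally (f' x)).

Definition C1_on (D : R -> Prop) (f f' : R -> R) : Prop :=
  forall x, D x ->
    has_deriv_within D f f' x /\
    filterlim f' (within D (locally x)) (locally (f' x)).

Definition W (g g' h h' : R -> R) (x : R) : R := g x * h' x - g' x * h x.

Definition det3 (a1 a2 a3 b1 b2 b3 c1 c2 c3 : R) : R :=
  a1 * (b2 * c3 - b3 * c2) - a2 * (b1 * c3 - b3 * c1) + a3 * (b1 * c2 - b2 * c1).

Definition inC (psi1 psi2 : R -> R) (J : R -> Prop) (f : R -> R) : Prop :=
  forall t1 t2 t3, J t1 -> J t2 -> J t3 -> t1 < t2 -> t2 < t3 ->
    0 <= det3 (psi1 t1) (psi1 t2) (psi1 t3)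
              (psi2 t1) (psi2 t2) (psi2 t3)
              (f t1) (f t2) (f t3).

Definition little_o_at (T : R) (x0 : Rbar) (phi2 phi1 : R -> R) : Prop :=
  forall eps : R, 0 < eps ->
    exists y : R, Rbar_lt y x0 /\
      forall x, in_I T x0 x -> y < x -> Rabs (phi2 x) <= eps * Rabs (phi1 x).

From Stdlib Require Import Reals Lra.
From Coquelicot Require Import Coquelicot.
Open Scope R_scope.

(* By the fundamental theorem of calculus, psi2 = phi2 - (phi2(T)/phi1(T)) phi1, and, with
   s = +-1 the sign of phi2 (constant on I by the intermediate value theorem),
   chi1 = s phi2 and chi2 = s ((phi1(T)/phi2(T)) phi2 - phi1).  Both pairs are therefore
   images of (phi1, phi2) under a constant matrix of determinant 1.  Such a change of
   basis preserves C^1, multiplies Wronskians by the determinant, and multiplies the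
   3x3 determinants defining C(psi1, psi2; I) by it as well. *)

Section RealLimitAlgebra.
Context {X : Type} {F : (X -> Prop) -> Prop} {FF : Filter F}.
Variables (p q : X -> R) (lp lq : R).
Hypotheses (Hp : filterlim p F (locally lp)) (Hq : filterlim q F (locally lq)).

Lemma filterlim_Rplus_fun : filterlim (fun y => p y + q y) F (locally (lp + lq)).
Proof. exact (filterlim_comp_2 p q Rplus Hp Hq (filterlim_plus (K := R_AbsRing) lp lq)). Qed.

Lemma filterlim_Rmult_fun : filterlim (fun y => p y * q y) F (locally (lp * lq)).
Proof. exact (filterlim_comp_2 p q Rmult Hp Hq (filterlim_mult (K := R_AbsRing) lp lq)). Qed.

Lemma filterlim_Rminus_fun : filterlim (fun y => p y - q y) F (locally (lp - lq)).
Proof.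
  exact (filterlim_comp_2 p (fun y => - q y) Rplus Hp
    (filterlim_comp _ _ _ q Ropp _ _ _ Hq (filterlim_opp (K := R_AbsRing) lq))
    (filterlim_plus (K := R_AbsRing) lp (- lq))).
Qed.

Lemma filterlim_Rdiv_fun : lq <> 0 -> filterlim (fun y => p y / q y) F (locally (lp / lq)).
Proof.
  intros Hlq.
  assert (Hlq' : Finite lq <> Finite 0) by (intros E; apply Hlq; injection E; easy).
  exact (filterlim_comp_2 p (fun y => / q y) Rmult Hp
    (filterlim_comp _ _ _ q Rinv _ _ _ Hq (filterlim_Rbar_inv lq Hlq'))
    (filterlim_mult (K := R_AbsRing) lp (/ lq))).
Qed.

End RealLimitAlgebra.

Lemma filterlim_within_subset {Y : UniformSpace} (D E : R -> Prop) (f : R -> Y) x l :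
  (forall y, E y -> D y) ->
  filterlim f (within D (locally x)) (locally l) -> filterlim f (within E (locally x)) (locally l).
Proof.
  intros HED Hf P HP. change (locally x (fun y => E y -> P (f y))).
  apply (filter_imp (fun y => D y -> P (f y))); [|exact (Hf P HP)].
  intros y Hy Ey. exact (Hy (HED y Ey)).
Qed.

Lemma C1_on_subset (D E : R -> Prop) (f f' : R -> R) :
  (forall y, E y -> D y) -> C1_on D f f' -> C1_on E f f'.
Proof.
  intros HED Hf x Ex. destruct (Hf x (HED x Ex)) as [Hd Hc]. split.
  - apply (filterlim_within_subset (fun y => D y /\ y <> x)); [|exact Hd].
    intros y [Ey Hyx]. exact (conj (HED y Ey) Hyx).
  - exact (filterlim_within_subset D E _ _ _ HED Hc).
Qed.

Lemma has_deriv_within_continuous (D : R -> Prop) (f f' : R -> R) x :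
  has_deriv_within D f f' x -> filterlim f (within D (locally x)) (locally (f x)).
Proof.
  intros Hd.
  set (Dx := fun y => D y /\ y <> x).
  assert (Hid : filterlim (fun y => y) (within Dx (locally x)) (locally x)).
  { intros P HP. change (locally x (fun y => Dx y -> P y)).
    apply (filter_imp P); [auto|exact HP]. }
  assert (Hlin : filterlim (fun y => f x + (f y - f x) / (y - x) * (y - x))
                   (within Dx (locally x)) (locally (f x + f' x * (x - x)))).
  { apply filterlim_Rplus_fun; [apply filterlim_const|].
    apply filterlim_Rmult_fun; [exact Hd|].
    apply filterlim_Rminus_fun; [exact Hid|apply filterlim_const]. }
  replace (f x + f' x * (x - x)) with (f x) in Hlin by ring.
  intros P HP. change (locally x (fun y => D y -> P (f y))).
  apply (filter_imp (fun y => Dx y -> P (f x + (f y - f x) / (y - x) * (y - x))));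
    [|exact (Hlin P HP)].
  intros y Hy Dy. destruct (Req_dec y x) as [->|Hyx].
  - exact (locally_singleton _ _ HP).
  - replace (f y) with (f x + (f y - f x) / (y - x) * (y - x)) by (field; lra).
    exact (Hy (conj Dy Hyx)).
Qed.

Lemma C1_on_continuous (D : R -> Prop) (f f' : R -> R) : C1_on D f f' -> continuous_on D f.
Proof. intros Hf x Dx. exact (has_deriv_within_continuous D f f' x (proj1 (Hf x Dx))). Qed.

Lemma has_deriv_within_is_derive (D : R -> Prop) (f f' : R -> R) x :
  locally x D -> has_deriv_within D f f' x -> is_derive f x (f' x).
Proof.
  intros [d2 HD] Hd. apply is_derive_Reals. intros eps Heps.
  destruct (proj1 (filterlim_locally _ _) Hd (mkposreal eps Heps)) as [d1 Hd1].
  exists (mkposreal (Rmin d1 d2) (Rmin_pos _ _ (cond_pos d1) (cond_pos d2))).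
  intros h Hh Hhd. simpl in Hhd.
  assert (Hball : forall d : posreal, Rmin d1 d2 <= d -> ball x d (x + h)).
  { intros d Hd'. change (Rabs (x + h + - x) < d).
    replace (x + h + - x) with h by ring. lra. }
  assert (Hxh : x + h <> x) by (intros E; apply Hh; lra).
  assert (Hq := Hd1 (x + h) (Hball d1 (Rmin_l _ _))
                  (conj (HD (x + h) (Hball d2 (Rmin_r _ _))) Hxh)).
  change (Rabs ((f (x + h) - f x) / (x + h - x) + - f' x) < eps) in Hq.
  now replace (x + h - x) with h in Hq by ring.
Qed.

Lemma C1_on_ext (D : R -> Prop) (f f' g : R -> R) :
  (forall x, D x -> f x = g x) -> C1_on D f f' -> C1_on D g f'.
Proof.
  intros Efg Hf x Dx. destruct (Hf x Dx) as [Hd Hc]. split; [|exact Hc].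
  apply (filterlim_within_ext _ (fun y => (f y - f x) / (y - x))); [|exact Hd].
  intros y [Dy _]. now rewrite (Efg y Dy), (Efg x Dx).
Qed.

Lemma C1_on_lincomb (D : R -> Prop) (f f' g g' : R -> R) a b :
  C1_on D f f' -> C1_on D g g' ->
  C1_on D (fun x => a * f x + b * g x) (fun x => a * f' x + b * g' x).
Proof.
  intros Hf Hg x Dx. destruct (Hf x Dx) as [Hfd Hfc]. destruct (Hg x Dx) as [Hgd Hgc].
  split.
  - apply (filterlim_within_ext _
      (fun y => a * ((f y - f x) / (y - x)) + b * ((g y - g x) / (y - x)))).
    + intros y [_ Hyx]. field. lra.
    + apply filterlim_Rplus_fun; apply filterlim_Rmult_fun; auto; apply filterlim_const.
  - apply filterlim_Rplus_fun; apply filterlim_Rmult_fun; auto; apply filterlim_const.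
Qed.

Lemma C1_on_div (D : R -> Prop) (u u' v v' : R -> R) :
  C1_on D u u' -> C1_on D v v' -> (forall x, D x -> v x <> 0) ->
  C1_on D (fun x => u x / v x) (fun x => (u' x * v x - u x * v' x) / (v x * v x)).
Proof.
  intros Hu Hv Hnz x Dx. destruct (Hu x Dx) as [Hud Huc]. destruct (Hv x Dx) as [Hvd Hvc].
  assert (Cu := C1_on_continuous D u u' Hu x Dx).
  assert (Cv := C1_on_continuous D v v' Hv x Dx).
  assert (Hvx := Hnz x Dx). split.
  - apply (filterlim_within_ext _
      (fun y => ((u y - u x) / (y - x) * v x - u x * ((v y - v x) / (y - x))) / (v y * v x))).
    + intros y [Dy Hyx]. assert (Hvy := Hnz y Dy). field. repeat split; auto; lra.
    + apply filterlim_Rdiv_fun; [| |now apply Rmult_integral_contrapositive].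
      * apply filterlim_Rminus_fun; apply filterlim_Rmult_fun; auto; apply filterlim_const.
      * apply filterlim_Rmult_fun; [|apply filterlim_const].
        apply (filterlim_within_subset D); [now intros y []|exact Cv].
  - apply filterlim_Rdiv_fun; [| |now apply Rmult_integral_contrapositive].
    + apply filterlim_Rminus_fun; apply filterlim_Rmult_fun; auto.
    + apply filterlim_Rmult_fun; auto.
Qed.

(* Extending a function on [a, b] by constants makes it continuous on all of R, so that
   the Stdlib/Coquelicot mean value and intermediate value theorems apply. *)
Definition clamp (a b y : R) : R := Rmax a (Rmin b y).

Lemma clamp_in a b y : a <= b -> a <= clamp a b y <= b.
Proof. intros. unfold clamp, Rmax, Rmin. repeat destruct Rle_dec; lra. Qed.

Lemma clamp_id a b y : a <= y <= b -> clamp a b y = y.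
Proof. intros. unfold clamp, Rmax, Rmin. repeat destruct Rle_dec; lra. Qed.

Lemma clamp_lipschitz a b y z : a <= b -> Rabs (clamp a b y - clamp a b z) <= Rabs (y - z).
Proof.
  intros. unfold clamp, Rmax, Rmin, Rabs.
  repeat destruct Rle_dec; repeat destruct Rcase_abs; lra.
Qed.

Lemma continuous_clamp (f : R -> R) a b :
  a <= b -> continuous_on (fun y => a <= y <= b) f ->
  forall y, continuous (fun z => f (clamp a b z)) y.
Proof.
  intros Hab Hf y.
  apply (filterlim_comp _ _ _ (clamp a b) f _
           (within (fun y => a <= y <= b) (locally (clamp a b y)))).
  - intros P [eps HP]. exists eps. intros z Hz.
    apply HP; [|exact (clamp_in a b z Hab)].
    change (Rabs (clamp a b z + - clamp a b y) < eps).
    eapply Rle_lt_trans; [apply clamp_lipschitz; exact Hab|exact Hz].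
  - exact (Hf _ (clamp_in a b y Hab)).
Qed.

Lemma RInt_Derive_C1_on_interval (g g' : R -> R) a b :
  a <= b -> C1_on (fun y => a <= y <= b) g g' -> RInt (Derive g) a b = g b - g a.
Proof.
  intros Hab Hg. destruct (Req_dec a b) as [<-|Hne].
  { rewrite RInt_point. change (0 = g a - g a). ring. }
  set (J := fun y => a <= y <= b).
  assert (Cg := continuous_clamp g a b Hab (C1_on_continuous J g g' Hg)).
  assert (Cg' := continuous_clamp g' a b Hab (fun y Jy => proj2 (Hg y Jy))).
  assert (Hloc : forall y, a < y < b -> locally y J).
  { intros y Hy. apply (locally_interval _ _ a b); simpl; try lra.
    intros z Hz1 Hz2. unfold J. simpl in *. lra. }
  assert (Dg : forall y, a < y < b -> is_derive g y (g' y)).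
  { intros y Hy. apply (has_deriv_within_is_derive J); [exact (Hloc y Hy)|apply Hg; lra]. }
  set (G := fun y => RInt (fun t => g' (clamp a b t)) a y).
  assert (DG : forall y, is_derive G y (g' (clamp a b y))).
  { intros y. apply (is_derive_RInt (fun t => g' (clamp a b t)) G a y); [|apply Cg'].
    apply filter_forall. intros z. apply (RInt_correct (V := R_CompleteNormedModule)).
    apply (ex_RInt_continuous (V := R_CompleteNormedModule)). intros t _. apply Cg'. }
  (* [G] and [g] have the same derivative inside [a, b], so they differ by a constant *)
  destruct (MVT_gen (fun y => G y - g (clamp a b y)) a b (fun _ => 0)) as [c [_ Hc]].
  - rewrite Rmin_left, Rmax_right by lra. intros y Hy.
    replace 0 with (minus (g' (clamp a b y)) (g' y))
      by (rewrite clamp_id by lra; unfold minus, plus, opp; simpl; ring).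
    apply (is_derive_minus G); [apply DG|].
    apply (is_derive_ext_loc g); [|exact (Dg y Hy)].
    apply (filter_imp J); [|exact (Hloc y Hy)].
    intros t Jt. now rewrite (clamp_id a b t Jt).
  - intros y _. apply continuity_pt_filterlim.
    apply (continuous_minus (V := R_NormedModule) G (fun z => g (clamp a b z))); [|apply Cg].
    apply (ex_derive_continuous (K := R_AbsRing) (V := R_NormedModule) G).
    exists (g' (clamp a b y)). apply DG.
  - assert (EG : RInt (Derive g) a b = G b).
    { apply RInt_ext. rewrite Rmin_left, Rmax_right by lra. intros t Ht.
      rewrite clamp_id by lra. exact (is_derive_unique _ _ _ (Dg t Ht)). }
    assert (G a = 0) by (unfold G; rewrite RInt_point; reflexivity).
    rewrite (clamp_id a b a), (clamp_id a b b) in Hc by lra. lra.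
Qed.

Lemma continuous_on_nonzero_same_sign (f : R -> R) a b :
  a <= b -> continuous_on (fun y => a <= y <= b) f ->
  (forall y, a <= y <= b -> f y <> 0) -> 0 < f a * f b.
Proof.
  intros Hab Hf Hnz.
  destruct (Rlt_or_le 0 (f a * f b)) as [|Hle]; [easy|exfalso].
  assert (Cf : continuity (fun y => f (clamp a b y))).
  { intros y. apply continuity_pt_filterlim, continuous_clamp; assumption. }
  destruct (IVT_gen _ a b 0 Cf) as [z [_ Hz]].
  - rewrite !clamp_id by lra.
    unfold Rmin, Rmax. destruct Rle_dec; split; nra.
  - exact (Hnz _ (clamp_in a b z Hab) Hz).
Qed.

Lemma W_lincomb (p1 p1' p2 p2' g1 g2 : R -> R) a b c d x :
  g1 x = a * p1 x + b * p2 x -> g2 x = c * p1 x + d * p2 x ->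
  W g1 (fun y => a * p1' y + b * p2' y) g2 (fun y => c * p1' y + d * p2' y) x
  = (a * d - b * c) * W p1 p1' p2 p2' x.
Proof. intros E1 E2. unfold W. rewrite E1, E2. ring. Qed.

Lemma det3_lincomb a b c d u1 u2 u3 v1 v2 v3 w1 w2 w3 :
  det3 (a * u1 + b * v1) (a * u2 + b * v2) (a * u3 + b * v3)
       (c * u1 + d * v1) (c * u2 + d * v2) (c * u3 + d * v3) w1 w2 w3
  = (a * d - b * c) * det3 u1 u2 u3 v1 v2 v3 w1 w2 w3.
Proof. unfold det3. ring. Qed.

Definition positive_wronskian_pair (D : R -> Prop) (psi1 psi2 : R -> R) : Prop :=
  exists psi1' psi2' : R -> R,
    C1_on D psi1 psi1' /\ C1_on D psi2 psi2' /\
    forall x, D x -> 0 < psi1 x /\ 0 < W psi1 psi1' psi2 psi2' x.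

Section UnimodularChange.
Variables (D : R -> Prop) (p1 p2 g1 g2 : R -> R) (a b c d : R).
Hypothesis Hdet : a * d - b * c = 1.
Hypothesis Eg1 : forall x, D x -> g1 x = a * p1 x + b * p2 x.
Hypothesis Eg2 : forall x, D x -> g2 x = c * p1 x + d * p2 x.

Lemma positive_wronskian_pair_unimodular (p1' p2' : R -> R) :
  C1_on D p1 p1' -> C1_on D p2 p2' -> (forall x, D x -> 0 < W p1 p1' p2 p2' x) ->
  (forall x, D x -> 0 < g1 x) -> positive_wronskian_pair D g1 g2.
Proof.
  intros H1 H2 HW Hg1.
  exists (fun y => a * p1' y + b * p2' y), (fun y => c * p1' y + d * p2' y).
  split; [|split].
  - apply (C1_on_ext D (fun y => a * p1 y + b * p2 y)); [|now apply C1_on_lincomb].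
    intros x Dx. now rewrite Eg1.
  - apply (C1_on_ext D (fun y => c * p1 y + d * p2 y)); [|now apply C1_on_lincomb].
    intros x Dx. now rewrite Eg2.
  - intros x Dx. split; [now apply Hg1|].
    rewrite (W_lincomb p1 p1' p2 p2' g1 g2 a b c d x (Eg1 x Dx) (Eg2 x Dx)), Hdet, Rmult_1_l.
    now apply HW.
Qed.

Lemma inC_unimodular (f : R -> R) : inC p1 p2 D f <-> inC g1 g2 D f.
Proof.
  assert (Edet : forall t1 t2 t3, D t1 -> D t2 -> D t3 ->
    det3 (g1 t1) (g1 t2) (g1 t3) (g2 t1) (g2 t2) (g2 t3) (f t1) (f t2) (f t3)
    = det3 (p1 t1) (p1 t2) (p1 t3) (p2 t1) (p2 t2) (p2 t3) (f t1) (f t2) (f t3)).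
  { intros t1 t2 t3 D1 D2 D3.
    rewrite !Eg1, !Eg2 by assumption. rewrite det3_lincomb, Hdet. ring. }
  split; intros Hf t1 t2 t3 D1 D2 D3 H12 H23; [rewrite Edet|rewrite <- Edet]; auto.
Qed.

End UnimodularChange.

Lemma in_I_interval (T : R) (x0 : Rbar) x y : in_I T x0 x -> T <= y <= x -> in_I T x0 y.
Proof.
  intros [HTx Hx] Hy. split; [lra|].
  apply (Rbar_le_lt_trans _ x); [simpl; lra|exact Hx].
Qed.

Lemma RInt_Derive_C1_on_I (T : R) (x0 : Rbar) (g g' : R -> R) :
  C1_on (in_I T x0) g g' -> forall x, in_I T x0 x -> RInt (Derive g) T x = g x - g T.
Proof.
  intros Hg x Hx. apply (RInt_Derive_C1_on_interval g g'); [apply Hx|].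
  apply (C1_on_subset (in_I T x0)); [|exact Hg].
  intros y Hy. exact (in_I_interval T x0 x y Hx Hy).
Qed.

Lemma Rabs_sign_on_I (T : R) (x0 : Rbar) (f : R -> R) :
  Rbar_lt T x0 -> continuous_on (in_I T x0) f -> (forall x, in_I T x0 x -> f x <> 0) ->
  exists s, s * s = 1 /\ forall x, in_I T x0 x -> Rabs (f x) = s * f x.
Proof.
  intros HT Hf Hnz.
  assert (Hsign : forall x, in_I T x0 x -> 0 < f T * f x).
  { intros x Hx. apply continuous_on_nonzero_same_sign; [apply Hx| |].
    - apply (continuous_on_subset (in_I T x0)); [|exact Hf].
      intros y Hy. exact (in_I_interval T x0 x y Hx Hy).
    - intros y Hy. exact (Hnz y (in_I_interval T x0 x y Hx Hy)). }
  assert (HfT := Hnz T (conj (Rle_refl T) HT)).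
  destruct (Rlt_or_le 0 (f T)) as [Hpos|Hneg]; [exists 1|exists (-1)];
    split; try ring; intros x Hx; specialize (Hsign x Hx).
  - rewrite Rabs_right by nra. ring.
  - rewrite Rabs_left by nra. ring.
Qed.

Theorem lemma7p5 (x0 : Rbar) (T : R) (HT : Rbar_lt T x0)
  (phi1 phi1' phi2 phi2' : R -> R)
  (H1 : C1_on (in_I T x0) phi1 phi1')
  (H2 : C1_on (in_I T x0) phi2 phi2')
  (Ho : little_o_at T x0 phi2 phi1)
  (Hpos : forall x, in_I T x0 x -> 0 < phi1 x)
  (Hnz : forall x, in_I T x0 x -> phi2 x <> 0)
  (HW : forall x, in_I T x0 x -> 0 < W phi1 phi1' phi2 phi2' x) :
  let psi1 := phi1 in
  let psi2 := fun x => phi1 x * RInt (fun t => Derive (fun s => phi2 s / phi1 s) t) T x in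
  let chi1 := fun x => Rabs (phi2 x) in
  let chi2 := fun x => - Rabs (phi2 x) * RInt (fun t => Derive (fun s => phi1 s / phi2 s) t) T x in
  (exists psi1' psi2' : R -> R,
     C1_on (in_I T x0) psi1 psi1' /\ C1_on (in_I T x0) psi2 psi2' /\
     forall x, in_I T x0 x -> 0 < psi1 x /\ 0 < W psi1 psi1' psi2 psi2' x) /\
  (exists chi1' chi2' : R -> R,
     C1_on (in_I T x0) chi1 chi1' /\ C1_on (in_I T x0) chi2 chi2' /\
     forall x, in_I T x0 x -> 0 < chi1 x /\ 0 < W chi1 chi1' chi2 chi2' x) /\
  (forall f : R -> R,
     (inC phi1 phi2 (in_I T x0) f <-> inC psi1 psi2 (in_I T x0) f) /\
     (inC psi1 psi2 (in_I T x0) f <-> inC chi1 chi2 (in_I T x0) f)).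
Proof.
  intros psi1 psi2 chi1 chi2.
  set (I := in_I T x0).
  assert (Hnz1 : forall x, I x -> phi1 x <> 0) by (intros x Hx; specialize (Hpos x Hx); lra).
  pose proof (RInt_Derive_C1_on_I T x0 _ _ (C1_on_div I phi2 phi2' phi1 phi1' H2 H1 Hnz1)) as F1.
  pose proof (RInt_Derive_C1_on_I T x0 _ _ (C1_on_div I phi1 phi1' phi2 phi2' H1 H2 Hnz)) as F2.
  destruct (Rabs_sign_on_I T x0 phi2 HT (C1_on_continuous I phi2 phi2' H2) Hnz)
    as [s [Hs Habs]].
  assert (IT : I T) by exact (conj (Rle_refl T) HT).
  set (c := phi2 T / phi1 T). set (d := phi1 T / phi2 T).
  assert (Epsi1 : forall x, I x -> psi1 x = 1 * phi1 x + 0 * phi2 x) by (intros; unfold psi1; ring).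
  assert (Epsi2 : forall x, I x -> psi2 x = - c * phi1 x + 1 * phi2 x).
  { intros x Hx. unfold psi2, c. rewrite F1 by exact Hx. field. now split; apply Hnz1. }
  assert (Echi1 : forall x, I x -> chi1 x = 0 * phi1 x + s * phi2 x).
  { intros x Hx. unfold chi1. rewrite Habs by exact Hx. ring. }
  assert (Echi2 : forall x, I x -> chi2 x = - s * phi1 x + s * d * phi2 x).
  { intros x Hx. unfold chi2, d. rewrite Habs, F2 by exact Hx. field. now split; apply Hnz. }
  assert (Hdet_psi : 1 * 1 - 0 * - c = 1) by ring.
  assert (Hdet_chi : 0 * (s * d) - s * - s = 1) by lra.
  split; [|split].
  - apply (positive_wronskian_pair_unimodular I phi1 phi2 psi1 psi2 1 0 (- c) 1
             Hdet_psi Epsi1 Epsi2 phi1' phi2'); auto.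
  - apply (positive_wronskian_pair_unimodular I phi1 phi2 chi1 chi2 0 s (- s) (s * d)
             Hdet_chi Echi1 Echi2 phi1' phi2'); auto.
    intros x Hx. apply Rabs_pos_lt, Hnz, Hx.
  - intros f.
    assert (Cpsi := inC_unimodular I phi1 phi2 psi1 psi2 _ _ _ _ Hdet_psi Epsi1 Epsi2 f).
    assert (Cchi := inC_unimodular I phi1 phi2 chi1 chi2 _ _ _ _ Hdet_chi Echi1 Echi2 f).
    split; [exact Cpsi|]. rewrite <- Cpsi. exact Cchi.
Qed.
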